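(* Let $p>q$ be even positive integers and let $g_{i,j}\in\{1,-1\}$ for $i=1,\dots,q$ and $j=1,\dots,p-q$. Put $\eta_i'=\sigma_1^{g_{i,1}}\sigma_2^{g_{i,2}}\cdots\sigma_{p-q-1}^{g_{i,p-q-1}}$, $\eta_i=\eta_i'\,\sigma_{p-q}^{g_{i,p-q}}$, and \[\kappa_i=\sigma_{p-q+1}^{-1}\sigma_{p-q+2}^{-1}\cdots\sigma_{p-i}^{-1}\,\sigma_{p-i+1}\cdots\sigma_{p-1}\qquad(i=1,\dots,q),\] (so $\kappa_1=\sigma_{p-q+1}^{-1}\cdots\sigma_{p-1}^{-1}$ and $\kappa_q=\sigma_{p-q+1}\cdots\sigma_{p-1}$). Then \[\eta_1\kappa_1\eta_2\kappa_2\cdots\eta_q\kappa_q\ \sim_M\ \eta_1'\eta_2'\cdots\eta_q'.\]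
   Context: $\sigma_1,\sigma_2,\dots$ denote the standard Artin generators of the braid groups. Two braids (possibly with different numbers of strands) are Markov equivalent, written $\sim_M$, if their closures are isotopic links. *)

From Stdlib Require Import Arith List Relations.
Import ListNotations.

(* A letter (i, b) is the Artin generator sigma_i (1-based) if b = true,
   and its inverse sigma_i^{-1} if b = false. *)
Definition letter := (nat * bool)%type.
Definition word := list letter.

Definition letter_inv (l : letter) : letter := (fst l, negb (snd l)).

Definition wf_word (n : nat) (w : word) : Prop :=
  Forall (fun l => 1 <= fst l /\ fst l <= n - 1) w.

Inductive braid_rel (n : nat) : word -> word -> Prop :=
| br_cancel : forall i b, 1 <= i <= n - 1 ->
    braid_rel n [(i, b); (i, negb b)] []
| br_far : forall i j b c, 1 <= i <= n - 1 -> 1 <= j <= n - 1 ->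
    (i + 2 <= j \/ j + 2 <= i) ->
    braid_rel n [(i, b); (j, c)] [(j, c); (i, b)]
| br_braid : forall i, 1 <= i -> i + 1 <= n - 1 ->
    braid_rel n [(i, true); (i + 1, true); (i, true)]
                [(i + 1, true); (i, true); (i + 1, true)].

Inductive braid_step (n : nat) : word -> word -> Prop :=
| bs_ctx : forall a u v b, braid_rel n u v -> braid_step n (a ++ u ++ b) (a ++ v ++ b).

Definition braid_eq (n : nat) : word -> word -> Prop :=
  clos_refl_sym_trans word (braid_step n).

Definition braid := (nat * word)%type.

Inductive markov_step : braid -> braid -> Prop :=
| ms_eq : forall n w w', 1 <= n -> wf_word n w -> wf_word n w' ->
    braid_eq n w w' -> markov_step (n, w) (n, w')
| ms_conj : forall n w l, 1 <= n -> wf_word n w -> 1 <= fst l <= n - 1 ->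
    markov_step (n, w) (n, [l] ++ w ++ [letter_inv l])
| ms_stab : forall n w b, 1 <= n -> wf_word n w ->
    markov_step (n, w) (n + 1, w ++ [(n, b)]).

(* Markov equivalence: equivalence relation generated by the Markov moves
   (by Markov's theorem, equivalent to isotopy of the closures). *)
Definition markov_equiv : braid -> braid -> Prop :=
  clos_refl_sym_trans braid markov_step.

(* The braids of the statement; g i j = true encodes g_{i,j} = 1, false encodes -1. *)
Definition eta' (p q : nat) (g : nat -> nat -> bool) (i : nat) : word :=
  map (fun j => (j, g i j)) (seq 1 (p - q - 1)).

Definition eta (p q : nat) (g : nat -> nat -> bool) (i : nat) : word :=
  eta' p q g i ++ [(p - q, g i (p - q))].

Definition kappa (p q : nat) (i : nat) : word :=
  map (fun k => (k, false)) (seq (p - q + 1) (q - i)) ++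
  map (fun k => (k, true)) (seq (p - i + 1) (i - 1)).

Definition lhs_word (p q : nat) (g : nat -> nat -> bool) : word :=
  flat_map (fun i => eta p q g i ++ kappa p q i) (seq 1 q).

Definition rhs_word (p q : nat) (g : nat -> nat -> bool) : word :=
  flat_map (fun i => eta' p q g i) (seq 1 q).

(** Induction on [q] with [p - q] fixed removes the last block at each step.  In
    the braid group, each [kappa_i] of the [q + 1]-block word is the [kappa_i] of
    the [q]-block word between two ascending runs of generators; the trailing run
    of one block commutes past [eta_(i+1)], whose generators are far away, and
    cancels the leading run of the next block.  What remains is the [q]-block word,
    then [eta'_(q+1)], then a conjugate [C sigma_(p-1)^(+-1) C^-1] with [C] on
    [p - 1] strands.  A cyclic rotation and a destabilisation delete
    [sigma_(p-1)^(+-1)] together with the last strand. *)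

From Stdlib Require Import Arith List Relations Lia Setoid.
Import ListNotations.

Definition letters (f : nat -> bool) (a k : nat) : word :=
  map (fun j => (j, f j)) (seq a k).

Definition pos_run (a k : nat) : word := letters (fun _ => true) a k.
Definition neg_run (a k : nat) : word := letters (fun _ => false) a k.

Definition word_inv (w : word) : word := rev (map letter_inv w).

Definition indices_in (lo hi : nat) (w : word) : Prop :=
  Forall (fun l => lo <= fst l <= hi) w.

Definition kappa_word (b r k : nat) : word := neg_run b r ++ pos_run (b + r) k.

Definition lhs_prefix (p q : nat) (g : nat -> nat -> bool) (t : nat) : word :=
  flat_map (fun i => eta p q g i ++ kappa p q i) (seq 1 t).

Arguments letters : simpl never.
Arguments pos_run : simpl never.
Arguments neg_run : simpl never.
Arguments word_inv : simpl never.
Arguments kappa_word : simpl never.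
Arguments lhs_prefix : simpl never.
Arguments eta : simpl never.
Arguments eta' : simpl never.
Arguments kappa : simpl never.
Arguments lhs_word : simpl never.
Arguments rhs_word : simpl never.

Lemma pos_run_S a k : pos_run a (S k) = (a, true) :: pos_run (S a) k.
Proof. reflexivity. Qed.

Lemma pos_run_Sr a k : pos_run a (S k) = pos_run a k ++ [(a + k, true)].
Proof. unfold pos_run, letters. now rewrite seq_S, map_app. Qed.

Lemma neg_run_Sr a k : neg_run a (S k) = neg_run a k ++ [(a + k, false)].
Proof. unfold neg_run, letters. now rewrite seq_S, map_app. Qed.

Lemma word_inv_cons l w : word_inv (l :: w) = word_inv w ++ [letter_inv l].
Proof. reflexivity. Qed.

Lemma wf_word_indices_in n w : indices_in 1 (n - 1) w -> wf_word n w.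
Proof. easy. Qed.

Lemma indices_in_app lo hi u v :
  indices_in lo hi u -> indices_in lo hi v -> indices_in lo hi (u ++ v).
Proof. intros. now apply Forall_app. Qed.

Lemma indices_in_cons lo hi i b w :
  lo <= i -> i <= hi -> indices_in lo hi w -> indices_in lo hi ((i, b) :: w).
Proof. now constructor. Qed.

Lemma indices_in_word_inv lo hi w : indices_in lo hi w -> indices_in lo hi (word_inv w).
Proof.
  intros H. apply Forall_rev, Forall_map.
  eapply Forall_impl; [| exact H]. now intros [i b].
Qed.

Lemma indices_in_letters lo hi f a k :
  lo <= a -> a + k <= hi + 1 -> indices_in lo hi (letters f a k).
Proof.
  intros. apply Forall_map, Forall_forall. intros j Hj.
  apply in_seq in Hj. simpl. lia.
Qed.

Lemma indices_in_widen lo hi lo' hi' w :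
  indices_in lo hi w -> lo' <= lo -> hi <= hi' -> indices_in lo' hi' w.
Proof.
  intros H ? ?. eapply Forall_impl; [| exact H]. simpl. lia.
Qed.

Ltac indices :=
  repeat match goal with
  | |- wf_word _ _ => apply wf_word_indices_in
  | |- indices_in _ _ [] => constructor
  | |- indices_in _ _ (_ ++ _) => apply indices_in_app
  | |- indices_in _ _ (_ :: _) => apply indices_in_cons
  | |- indices_in _ _ (word_inv _) => apply indices_in_word_inv
  | |- indices_in _ _ (letters _ _ _) => apply indices_in_letters
  | |- indices_in _ _ (pos_run _ _) => apply indices_in_letters
  | |- indices_in _ _ (neg_run _ _) => apply indices_in_letters
  | H : indices_in _ _ ?w |- indices_in _ _ ?w => apply (indices_in_widen _ _ _ _ w H)
  end; try lia.

#[local] Instance braid_eq_equivalence n : Equivalence (braid_eq n).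
Proof.
  split.
  - intro. apply rst_refl.
  - intros ? ? ?. now apply rst_sym.
  - intros ? ? ? ? ?. eapply rst_trans; eassumption.
Qed.

Lemma braid_eq_of_rel n u v : braid_rel n u v -> braid_eq n u v.
Proof.
  intros H. apply rst_step.
  pose proof (bs_ctx n [] u v [] H) as Hs. now rewrite !app_nil_r in Hs.
Qed.

Lemma braid_eq_ctx n a u v b :
  braid_eq n u v -> braid_eq n (a ++ u ++ b) (a ++ v ++ b).
Proof.
  induction 1 as [u v [a' u' v' b' Hr] | | | ].
  - apply rst_step. rewrite !app_assoc, <- !(app_assoc (a ++ a')),
      <- !(app_assoc _ _ b). now constructor.
  - reflexivity.
  - now symmetry.
  - etransitivity; eassumption.
Qed.

Lemma braid_eq_rewrite n a b u v w R :
  braid_eq n u v -> w = a ++ u ++ b -> braid_eq n (a ++ v ++ b) R -> braid_eq n w R.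
Proof. intros H -> HR. rewrite <- HR. now apply braid_eq_ctx. Qed.

Ltac list_norm :=
  repeat (rewrite <- app_assoc || rewrite app_nil_r || rewrite app_nil_l); simpl.

(** [brewrite H between a and b], for [H : braid_eq n u v], rewrites the left-hand
    side of the goal, reassociated as [a ++ u ++ b], into [a ++ v ++ b]. *)
Tactic Notation "brewrite" constr(H) "between" uconstr(a) "and" uconstr(b) :=
  apply (braid_eq_rewrite _ a b _ _ _ _ H); [list_norm; list_norm; reflexivity | list_norm].

Ltac bfinish := list_norm; list_norm; reflexivity.

Lemma cancel_letter n i b : 1 <= i <= n - 1 -> braid_eq n [(i, b); (i, negb b)] [].
Proof. intros. now apply braid_eq_of_rel, br_cancel. Qed.

Lemma braid_rel_S n i : 1 <= i -> S i <= n - 1 ->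
  braid_eq n [(i, true); (S i, true); (i, true)] [(S i, true); (i, true); (S i, true)].
Proof. intros. apply braid_eq_of_rel. rewrite <- Nat.add_1_r. constructor; lia. Qed.

Lemma word_mul_inv n w : wf_word n w -> braid_eq n (w ++ word_inv w) [].
Proof.
  induction w as [| [i c] w IH]; intros Hw; [reflexivity |].
  inversion Hw as [| ? ? Hi Hw']; subst. rewrite word_inv_cons.
  brewrite (IH Hw') between [(i, c)] and [letter_inv (i, c)].
  apply cancel_letter. simpl in Hi. lia.
Qed.

Lemma word_inv_mul n w : wf_word n w -> braid_eq n (word_inv w ++ w) [].
Proof.
  induction w as [| [i c] w IH]; intros Hw; [reflexivity |].
  inversion Hw as [| ? ? Hi Hw']; subst. rewrite word_inv_cons. simpl.
  assert (Hc : braid_eq n [(i, negb c); (i, c)] []).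
  { rewrite <- (Bool.negb_involutive c) at 2. apply cancel_letter. simpl in Hi. lia. }
  brewrite Hc between (word_inv w) and w. now apply IH.
Qed.

Lemma braid_eq_word_inv n u v : wf_word n u -> wf_word n v ->
  braid_eq n u v -> braid_eq n (word_inv u) (word_inv v).
Proof.
  intros Hu Hv H.
  transitivity (word_inv u ++ v ++ word_inv v).
  { symmetry. brewrite (word_mul_inv n v Hv) between (word_inv u) and [].
    bfinish. }
  symmetry in H.
  brewrite H between (word_inv u) and (word_inv v).
  brewrite (word_inv_mul n u Hu) between [] and (word_inv v). bfinish.
Qed.

Lemma letter_far_comm n i b v lo hi : 1 <= i <= n - 1 -> indices_in lo hi v ->
  wf_word n v -> i + 2 <= lo \/ hi + 2 <= i -> braid_eq n ((i, b) :: v) (v ++ [(i, b)]).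
Proof.
  induction v as [| [j c] v IH]; intros Hi Hr Hw Hf; [reflexivity |].
  inversion Hr as [| ? ? Hj Hr']; inversion Hw as [| ? ? Hj' Hw']; subst. simpl in *.
  assert (Hs : braid_eq n [(i, b); (j, c)] [(j, c); (i, b)])
    by (apply braid_eq_of_rel; constructor; lia).
  brewrite Hs between [] and v.
  brewrite (IH Hi Hr' Hw' Hf) between [(j, c)] and []. bfinish.
Qed.

Lemma word_far_comm n u v lo1 hi1 lo2 hi2 :
  indices_in lo1 hi1 u -> indices_in lo2 hi2 v -> wf_word n u -> wf_word n v ->
  hi1 + 2 <= lo2 \/ hi2 + 2 <= lo1 -> braid_eq n (u ++ v) (v ++ u).
Proof.
  induction u as [| [i b] u IH]; intros Hr1 Hr2 Hw1 Hw2 Hf.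
  - now rewrite app_nil_r.
  - inversion Hr1 as [| ? ? Hi Hr1']; inversion Hw1 as [| ? ? Hi' Hw1']; subst.
    simpl in *.
    brewrite (IH Hr1' Hr2 Hw1' Hw2 Hf) between [(i, b)] and [].
    brewrite (letter_far_comm n i b v lo2 hi2 Hi' Hr2 Hw2 ltac:(lia))
      between [] and u.
    bfinish.
Qed.

Lemma adjacent_conj_pos n j : 1 <= j -> S j <= n - 1 ->
  braid_eq n [(S j, false); (j, true); (S j, true)] [(j, true); (S j, true); (j, false)].
Proof.
  intros.
  transitivity [(S j, false); (j, true); (S j, true); (j, true); (j, false)].
  { symmetry. brewrite (cancel_letter n j true ltac:(lia))
      between [(S j, false); (j, true); (S j, true)] and []. bfinish. }
  brewrite (braid_rel_S n j ltac:(lia) ltac:(lia)) between [(S j, false)] and [(j, false)].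
  brewrite (cancel_letter n (S j) false ltac:(lia))
    between [] and [(j, true); (S j, true); (j, false)].
  reflexivity.
Qed.

Lemma adjacent_conj n j e : 1 <= j -> S j <= n - 1 ->
  braid_eq n [(S j, false); (j, e); (S j, true)] [(j, true); (S j, e); (j, false)].
Proof.
  intros Hj Hn. destruct e; [now apply adjacent_conj_pos |].
  pose proof (adjacent_conj_pos n j Hj Hn) as H.
  apply braid_eq_word_inv in H; [| indices | indices].
  exact H.
Qed.

Lemma pos_run_letter_shift n k : forall a j, 1 <= a -> a + k <= n - 1 -> a <= j < a + k ->
  braid_eq n (pos_run a (S k) ++ [(j, true)]) ((S j, true) :: pos_run a (S k)).
Proof.
  induction k as [| k IH]; intros a j Ha Hk Hj; [lia |].
  rewrite !(pos_run_S a), !(pos_run_S (S a)).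
  destruct (Nat.eq_dec j a) as [-> | Hne].
  - assert (Hc : braid_eq n (pos_run (S (S a)) k ++ [(a, true)])
                            ([(a, true)] ++ pos_run (S (S a)) k))
      by (apply (word_far_comm n _ _ (S (S a)) (a + k + 1) a a); indices).
    brewrite Hc between [(a, true); (S a, true)] and [].
    brewrite (braid_rel_S n a Ha ltac:(lia)) between [] and (pos_run (S (S a)) k).
    reflexivity.
  - pose proof (IH (S a) j ltac:(lia) ltac:(lia) ltac:(lia)) as Hs.
    rewrite pos_run_S in Hs.
    brewrite Hs between [(a, true)] and [].
    assert (Hc : braid_eq n [(a, true); (S j, true)] [(S j, true); (a, true)])
      by (apply braid_eq_of_rel; constructor; lia).
    brewrite Hc between [] and ((S a, true) :: pos_run (S (S a)) k).
    reflexivity.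
Qed.

Lemma pos_run_shift n a k r : 1 <= a -> a + k <= n - 1 -> r <= k ->
  braid_eq n (pos_run a (S k) ++ pos_run a r) (pos_run (S a) r ++ pos_run a (S k)).
Proof.
  intros Ha Hk. induction r as [| r IH]; intros Hr; [bfinish |].
  rewrite (pos_run_Sr a r), (pos_run_Sr (S a) r).
  brewrite (IH ltac:(lia)) between [] and [(a + r, true)].
  brewrite (pos_run_letter_shift n k a (a + r) Ha Hk ltac:(lia))
    between (pos_run (S a) r) and [].
  replace (S a + r) with (S (a + r)) by lia. bfinish.
Qed.

(** The trailing run for [(r, k)] is the inverse of the leading run for
    [(r - 1, k + 1)]: this is what telescopes in [lhs_prefix_telescope]. *)
Lemma kappa_word_S n b r k : 1 <= b -> b + r + k <= n - 1 ->
  braid_eq n (kappa_word b (S r) k)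
    (pos_run (S (b + r)) k ++ kappa_word b r k ++ word_inv (pos_run (b + r) (S k))).
Proof.
  intros Hb Hn. unfold kappa_word. rewrite neg_run_Sr.
  replace (b + S r) with (S (b + r)) by lia. set (a := b + r).
  assert (Hc : braid_eq n (pos_run (S a) k ++ neg_run b r) (neg_run b r ++ pos_run (S a) k))
    by (apply (word_far_comm n _ _ (S a) (a + k) b (b + r - 1)); indices).
  assert (Hs : braid_eq n (pos_run (S a) k ++ pos_run a k ++ word_inv (pos_run a (S k)))
                          ((a, false) :: pos_run (S a) k)).
  { symmetry.
    transitivity ((a, false) :: pos_run (S a) k ++ pos_run a (S k) ++ word_inv (pos_run a (S k))).
    { symmetry. brewrite (word_mul_inv n (pos_run a (S k)) ltac:(indices))
        between ((a, false) :: pos_run (S a) k) and []. bfinish. }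
    pose proof (pos_run_shift n a k k ltac:(lia) ltac:(lia) ltac:(lia)) as Hsh.
    symmetry in Hsh.
    brewrite Hsh between [(a, false)] and (word_inv (pos_run a (S k))).
    rewrite (pos_run_S a k).
    brewrite (cancel_letter n a false ltac:(lia))
      between [] and (pos_run (S a) k ++ pos_run a k ++ word_inv (pos_run a (S k))).
    reflexivity. }
  symmetry.
  brewrite Hc between [] and (pos_run a k ++ word_inv (pos_run a (S k))).
  brewrite Hs between (neg_run b r) and [].
  bfinish.
Qed.

Lemma pos_run_conj n k : forall a e, 1 <= a -> a + k <= n - 1 ->
  braid_eq n (word_inv (pos_run (S a) k) ++ (a, e) :: pos_run (S a) k)
             (pos_run a k ++ (a + k, e) :: word_inv (pos_run a k)).
Proof.
  induction k as [| k IH]; intros a e Ha Hk.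
  - rewrite Nat.add_0_r. bfinish.
  - rewrite !pos_run_S, !word_inv_cons. simpl.
    brewrite (adjacent_conj n a e Ha ltac:(lia))
      between (word_inv (pos_run (S (S a)) k)) and (pos_run (S (S a)) k).
    assert (Hc1 : braid_eq n (word_inv (pos_run (S (S a)) k) ++ [(a, true)])
                             ([(a, true)] ++ word_inv (pos_run (S (S a)) k)))
      by (apply (word_far_comm n _ _ (S (S a)) (a + k + 1) a a); indices).
    brewrite Hc1 between [] and ((S a, e) :: (a, false) :: pos_run (S (S a)) k).
    assert (Hc2 : braid_eq n ([(a, false)] ++ pos_run (S (S a)) k)
                             (pos_run (S (S a)) k ++ [(a, false)]))
      by (apply (word_far_comm n _ _ a a (S (S a)) (a + k + 1)); indices).
    brewrite Hc2 between ((a, true) :: word_inv (pos_run (S (S a)) k) ++ [(S a, e)])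
      and [].
    brewrite (IH (S a) e ltac:(lia) ltac:(lia)) between [(a, true)] and [(a, false)].
    rewrite Nat.add_succ_r. bfinish.
Qed.

Lemma lhs_prefix_S p q g t :
  lhs_prefix p q g (S t) = lhs_prefix p q g t ++ eta p q g (S t) ++ kappa p q (S t).
Proof. unfold lhs_prefix. rewrite seq_S, flat_map_app. simpl. now rewrite app_nil_r. Qed.

Lemma eta_add m q g i : eta (m + q) q g i = letters (g i) 1 (m - 1) ++ [(m, g i m)].
Proof. unfold eta, eta'. now rewrite Nat.add_sub. Qed.

Lemma kappa_add m q i : i <= q -> kappa (m + q) q i = kappa_word (m + 1) (q - i) (i - 1).
Proof.
  intros Hi. unfold kappa, kappa_word. rewrite Nat.add_sub.
  now replace (m + q - i + 1) with (m + 1 + (q - i)) by lia.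
Qed.

Lemma kappa_word_0 b k : kappa_word b 0 k = pos_run b k.
Proof. unfold kappa_word. now rewrite Nat.add_0_r. Qed.

Lemma kappa_add_S n m q j : 1 <= m -> j < q -> m + q <= n - 1 ->
  braid_eq n (kappa (m + S q) (S q) (S j))
    (pos_run (m + q + 1 - j) j ++ kappa (m + q) q (S j)
       ++ word_inv (pos_run (m + q - j) (S j))).
Proof.
  intros Hm Hj Hn. rewrite !kappa_add by lia. simpl.
  replace (q - j) with (S (q - S j)) by lia.
  replace (m + q + 1 - j) with (S (m + 1 + (q - S j))) by lia.
  replace (m + q - j) with (m + 1 + (q - S j)) by lia.
  rewrite Nat.sub_0_r. apply kappa_word_S; lia.
Qed.

Lemma lhs_prefix_telescope m q g t : 1 <= m -> t <= q ->
  braid_eq (m + S q) (lhs_prefix (m + S q) (S q) g t)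
    (lhs_prefix (m + q) q g t ++ word_inv (pos_run (m + q + 1 - t) t)).
Proof.
  intros Hm. induction t as [| t IH]; intros Ht; [reflexivity |].
  rewrite !lhs_prefix_S, !eta_add.
  set (F := lhs_prefix (m + q) q g t).
  set (E := letters (g (S t)) 1 (m - 1) ++ [(m, g (S t) m)]).
  set (Z := pos_run (m + q + 1 - t) t).
  brewrite (IH ltac:(lia)) between [] and (E ++ kappa (m + S q) (S q) (S t)).
  brewrite (kappa_add_S (m + S q) m q t Hm ltac:(lia) ltac:(lia))
    between (F ++ word_inv Z ++ E) and [].
  assert (Hc : braid_eq (m + S q) (word_inv Z ++ E) (E ++ word_inv Z))
    by (apply (word_far_comm _ _ _ (m + q + 1 - t) (m + q) 1 m); unfold E, Z; indices).
  brewrite Hc between F and (Z ++ kappa (m + q) q (S t) ++ word_inv (pos_run (m + q - t) (S t))).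
  brewrite (word_inv_mul (m + S q) Z ltac:(unfold Z; indices))
    between (F ++ E) and (kappa (m + q) q (S t) ++ word_inv (pos_run (m + q - t) (S t))).
  replace (m + q + 1 - S t) with (m + q - t) by lia. bfinish.
Qed.

Lemma lhs_word_S m q g : 1 <= m ->
  braid_eq (m + S q) (lhs_word (m + S q) (S q) g)
    (lhs_word (m + q) q g ++ letters (g (S q)) 1 (m - 1)
       ++ pos_run m q ++ (m + q, g (S q) m) :: word_inv (pos_run m q)).
Proof.
  intros Hm. change (lhs_word ?p ?q g) with (lhs_prefix p q g q).
  rewrite lhs_prefix_S, eta_add, kappa_add by lia. simpl.
  rewrite Nat.sub_diag, Nat.sub_0_r, kappa_word_0, Nat.add_1_r.
  set (A := letters (g (S q)) 1 (m - 1)).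
  set (C := pos_run (S m) q).
  brewrite (lhs_prefix_telescope m q g q Hm (le_n q))
    between [] and ((A ++ [(m, g (S q) m)]) ++ C).
  replace (m + q + 1 - q) with (S m) by lia. fold C.
  assert (Hc : braid_eq (m + S q) (word_inv C ++ A) (A ++ word_inv C))
    by (apply (word_far_comm _ _ _ (S m) (m + q) 1 (m - 1)); unfold A, C; indices).
  brewrite Hc between (lhs_prefix (m + q) q g q) and ((m, g (S q) m) :: C).
  brewrite (pos_run_conj (m + S q) q m (g (S q) m) Hm ltac:(lia))
    between (lhs_prefix (m + q) q g q ++ A) and [].
  reflexivity.
Qed.

Lemma rhs_word_S m q g :
  rhs_word (m + S q) (S q) g = rhs_word (m + q) q g ++ letters (g (S q)) 1 (m - 1).
Proof.
  unfold rhs_word. rewrite seq_S, flat_map_app. simpl. unfold eta'.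
  rewrite !Nat.add_sub, app_nil_r. reflexivity.
Qed.

Lemma indices_in_lhs_word m q g : 1 <= m -> indices_in 1 (m + q - 1) (lhs_word (m + q) q g).
Proof.
  intros Hm. apply Forall_flat_map, Forall_forall. intros i Hi.
  apply in_seq in Hi. change (indices_in 1 (m + q - 1) (eta (m + q) q g i ++ kappa (m + q) q i)).
  rewrite eta_add, kappa_add by lia. unfold kappa_word. indices.
Qed.

#[local] Instance markov_equiv_equivalence : Equivalence markov_equiv.
Proof.
  split.
  - intro. apply rst_refl.
  - intros ? ? ?. now apply rst_sym.
  - intros ? ? ? ? ?. eapply rst_trans; eassumption.
Qed.

Lemma markov_braid_eq n w w' : 1 <= n -> wf_word n w -> wf_word n w' ->
  braid_eq n w w' -> markov_equiv (n, w) (n, w').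
Proof. intros. now apply rst_step, ms_eq. Qed.

Lemma markov_conj_word n u w : 1 <= n -> wf_word n u -> wf_word n w ->
  markov_equiv (n, w) (n, u ++ w ++ word_inv u).
Proof.
  revert w. induction u as [| l u IH]; intros w Hn Hu Hw.
  - now rewrite app_nil_r.
  - inversion Hu as [| ? ? Hl Hu']; subst.
    rewrite (IH w Hn Hu' Hw), word_inv_cons.
    replace ((l :: u) ++ w ++ word_inv u ++ [letter_inv l])
      with ([l] ++ (u ++ w ++ word_inv u) ++ [letter_inv l]) by bfinish.
    change (indices_in 1 (n - 1) u) in Hu'. change (indices_in 1 (n - 1) w) in Hw.
    apply rst_step, ms_conj; [easy | indices | easy].
Qed.

Lemma markov_rotate n u v : 1 <= n -> wf_word n u -> wf_word n v ->
  markov_equiv (n, u ++ v) (n, v ++ u).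
Proof.
  intros Hn Hu Hv.
  change (indices_in 1 (n - 1) u) in Hu. change (indices_in 1 (n - 1) v) in Hv.
  rewrite (markov_conj_word n v (u ++ v)) by (easy || indices).
  apply markov_braid_eq; [easy | indices | indices |].
  brewrite (word_mul_inv n v ltac:(indices)) between (v ++ u) and []. bfinish.
Qed.

Lemma markov_destab_conj n x c e : 1 <= n -> wf_word n x -> wf_word n c ->
  markov_equiv (n + 1, x ++ c ++ (n, e) :: word_inv c) (n, x).
Proof.
  intros Hn Hx Hc.
  change (indices_in 1 (n - 1) x) in Hx. change (indices_in 1 (n - 1) c) in Hc.
  replace (x ++ c ++ (n, e) :: word_inv c) with ((x ++ c ++ [(n, e)]) ++ word_inv c) by bfinish.
  rewrite markov_rotate by (lia || indices).
  replace (word_inv c ++ x ++ c ++ [(n, e)]) with ((word_inv c ++ x ++ c) ++ [(n, e)])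
    by bfinish.
  rewrite <- (rst_step _ _ _ _ (ms_stab n (word_inv c ++ x ++ c) e Hn ltac:(indices))).
  replace (word_inv c ++ x ++ c) with ((word_inv c ++ x) ++ c) by bfinish.
  rewrite markov_rotate by (easy || indices).
  apply markov_braid_eq; [easy | indices | indices |].
  brewrite (word_mul_inv n c ltac:(indices)) between [] and x. reflexivity.
Qed.

Lemma lhs_word_app_markov_equiv m g : 1 <= m -> forall q w, indices_in 1 (m - 1) w ->
  markov_equiv (m + q, lhs_word (m + q) q g ++ w) (m, rhs_word (m + q) q g ++ w).
Proof.
  intros Hm q. induction q as [| q IH]; intros w Hw.
  { rewrite Nat.add_0_r. reflexivity. }
  set (a := letters (g (S q)) 1 (m - 1)).
  rewrite rhs_word_S, <- app_assoc, <- IH by (unfold a; indices).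
  set (u := lhs_word (m + q) q g ++ a).
  set (c := pos_run m q).
  set (y := c ++ (m + q, g (S q) m) :: word_inv c).
  assert (Hu : indices_in 1 (m + q - 1) u).
  { pose proof (indices_in_lhs_word m q g Hm). unfold u, a. indices. }
  transitivity (m + S q, (u ++ y) ++ w).
  { apply markov_braid_eq; [lia | | unfold y, c; indices |].
    - pose proof (indices_in_lhs_word m (S q) g Hm). indices.
    - brewrite (lhs_word_S m q g Hm) between [] and w. unfold u, y, c. bfinish. }
  rewrite (markov_rotate (m + S q) (u ++ y) w) by (lia || unfold y, c; indices).
  replace (m + S q) with (m + q + 1) by lia.
  rewrite app_assoc. unfold y.
  rewrite markov_destab_conj by (lia || unfold c; indices).
  rewrite (markov_rotate (m + q) w u) by (lia || indices).
  unfold u, a. now rewrite <- app_assoc.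
Qed.

Theorem lemma3p2 (p q : nat) (g : nat -> nat -> bool) :
  0 < q -> q < p -> Nat.Even p -> Nat.Even q ->
  markov_equiv (p, lhs_word p q g) (p - q, rhs_word p q g).
Proof.
  intros _ Hpq _ _.
  replace p with ((p - q) + q) by lia. rewrite Nat.add_sub.
  pose proof (lhs_word_app_markov_equiv (p - q) g ltac:(lia) q [] ltac:(constructor)) as H.
  now rewrite !app_nil_r in H.
Qed.
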